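(* Let $\Sigma$ be an alphabet with $|\Sigma|=q$ and let $C\subseteq\Sigma^n$ be a code with $|C|\ge 2$ and minimum Levenshtein distance $d$. Suppose there is a word $v\in\Sigma^N$ that contains every codeword of $C$ as a (not necessarily contiguous) subsequence. If $$\frac{d}{2n} > 1 - \frac{n}{N},$$ then $$|C| \leq \frac{Nd}{Nd - 2(N-n)n}.$$
   Context: For words $x,y$ over $\Sigma$, the Levenshtein distance $d_\mathsf{L}(x,y)$ is the minimum number of single-symbol insertions and deletions needed to transform $x$ into $y$. The minimum Levenshtein distance of a code $C$ is $\min\{d_\mathsf{L}(c_1,c_2): c_1\neq c_2 \in C\}$. *)

From mathcomp Require Import all_boot all_order all_algebra.
Set Implicit Arguments. Unset Strict Implicit. Unset Printing Implicit Defensive.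

Section Lev.
Variable T : finType.

Definition deletions (x : seq T) : seq (seq T) :=
  [seq take i x ++ drop i.+1 x | i <- iota 0 (size x)].

Definition insertions (x : seq T) : seq (seq T) :=
  [seq take i x ++ a :: drop i x | i <- iota 0 (size x).+1, a <- enum T].

Definition edit_step (x y : seq T) : bool :=
  (y \in deletions x) || (y \in insertions x).

Fixpoint edits (k : nat) (x y : seq T) : bool :=
  match k with
  | 0 => x == y
  | k'.+1 => has (fun z => edits k' z y) (deletions x ++ insertions x)
  end.

Lemma editsS k (x y : seq T) :
  edits k.+1 x y = has (fun z => edits k z y) (deletions x ++ insertions x).
Proof. by []. Qed.

Lemma edits_cons k (a : T) (x y : seq T) : edits k x y -> edits k (a :: x) (a :: y).
Proof.
elim: k x => [|k IH] x; first by move=> /= /eqP ->.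
rewrite !editsS.
case/hasP=> z; rewrite mem_cat => Hz He; apply/hasP.
case/orP: Hz.
  move=> /mapP [i Hi Ez]; subst z; exists (a :: (take i x ++ drop i.+1 x)); last exact: IH.
  rewrite mem_cat; apply/orP; left; apply/mapP; exists i.+1 => //.
  by move: Hi; rewrite !mem_iota /= !add0n ltnS.
move=> /allpairsP [[i' b'] [Hi Hb Ez]]; subst z.
exists (a :: (take i' x ++ b' :: drop i' x)); last exact: IH.
rewrite mem_cat; apply/orP; right; apply/allpairsP; exists (i'.+1, b').
split; [|by rewrite mem_enum|by []].
by move: Hi; rewrite !mem_iota /= !add0n ltnS.
Qed.

Lemma edits_trans k l (x y z : seq T) :
  edits k x y -> edits l y z -> edits (k + l) x z.
Proof.
elim: k x => [|k IH] x; first by move=> /= /eqP ->.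
rewrite addSn !editsS; case/hasP=> w Hw He Hl; apply/hasP; exists w => //; exact: IH He Hl.
Qed.

Lemma edits_to_nil (x : seq T) : edits (size x) x [::].
Proof.
elim: x => [|a x IH] //; rewrite [size _]/= editsS; apply/hasP; exists x => //.
rewrite mem_cat; apply/orP; left; apply/mapP; exists 0 => //; by rewrite /= drop0.
Qed.

Lemma edits_from_nil (y : seq T) : edits (size y) [::] y.
Proof.
elim: y => [|a y IH] //; rewrite [size _]/= editsS; apply/hasP; exists [:: a].
  rewrite mem_cat; apply/orP; right; apply/allpairsP; exists (0, a).
  by split; [|rewrite mem_enum|].
exact: edits_cons.
Qed.

Lemma edits_ex (x y : seq T) : exists k, edits k x y.
Proof.
exists (size x + size y); exact: edits_trans (edits_to_nil x) (edits_from_nil y).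
Qed.

(* Levenshtein (insertion/deletion) distance d_L(x,y):
   minimum number of single-symbol insertions and deletions turning x into y *)
Definition levenshtein (x y : seq T) : nat := ex_minn (edits_ex x y).

End Lev.

(* v contains w as a (not necessarily contiguous) subsequence *)
(* mathcomp's  subseq w v  is exactly this notion. *)

From mathcomp Require Import all_boot all_order all_algebra zify ring.
Import Order.TTheory GRing.Theory Num.Theory.
Set Implicit Arguments. Unset Strict Implicit. Unset Printing Implicit Defensive.

(* Record each codeword c by the n-element set S_c of positions it occupies in
   the supersequence v.  The letters of v at the positions in S_c :&: S_c' form
   a common subsequence of c and c', so d <= d_L(c, c') <= 2n - 2|S_c :&: S_c'|.
   If m_p counts the codewords using position p, then sum m_p = |C| n and
   sum m_p^2 = sum_(c, c') |S_c :&: S_c'| <= |C| n + |C| (|C| - 1) (n - d/2);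
   Cauchy-Schwarz, (|C| n)^2 <= N sum m_p^2, rearranges into the bound, whose
   denominator is positive exactly when d / 2n > 1 - n / N. *)

Section Edits.
Variable T : finType.
Implicit Types (a : T) (w x y : seq T).

Lemma edits_delete_head a x : edits 1 (a :: x) x.
Proof.
rewrite editsS; apply/hasP; exists x; last by rewrite /= eqxx.
by rewrite mem_cat; apply/orP; left; apply/mapP; exists 0; rewrite /= ?drop0.
Qed.

Lemma edits_insert_head a x : edits 1 x (a :: x).
Proof.
rewrite editsS; apply/hasP; exists (a :: x); last by rewrite /= eqxx.
rewrite mem_cat; apply/orP; right; apply/allpairsP; exists (0, a).
by rewrite mem_enum take0 drop0.
Qed.

Lemma edits_subseq_delete w x : subseq w x -> edits (size x - size w) x w.
Proof.
elim: x w => [|a x IHx] [|b w] //; first by rewrite subn0 => _; apply: edits_to_nil.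
rewrite /=; case: eqP => [<- /IHx|_ sub_w]; first by rewrite subSS; apply: edits_cons.
have le_w := size_subseq sub_w; rewrite /= in le_w.
rewrite subSS -(subnSK le_w) -add1n.
exact: edits_trans (edits_delete_head a x) (IHx _ sub_w).
Qed.

Lemma edits_subseq_insert w y : subseq w y -> edits (size y - size w) w y.
Proof.
elim: y w => [|a y IHy] [|b w] //; first by rewrite subn0 => _; apply: edits_from_nil.
rewrite /=; case: eqP => [<- /IHy|_ sub_w]; first by rewrite subSS; apply: edits_cons.
have le_w := size_subseq sub_w; rewrite /= in le_w.
rewrite subSS -(subnSK le_w) -addn1.
exact: edits_trans (IHy _ sub_w) (edits_insert_head a y).
Qed.

Lemma levenshtein_min k x y : edits k x y -> levenshtein x y <= k.
Proof. by rewrite /levenshtein; case: ex_minnP => m _; apply. Qed.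

Lemma levenshtein_common_subseq w x y : subseq w x -> subseq w y ->
  levenshtein x y <= (size x - size w) + (size y - size w).
Proof.
move=> sub_wx sub_wy; apply: levenshtein_min.
exact: edits_trans (edits_subseq_delete sub_wx) (edits_subseq_insert sub_wy).
Qed.

End Edits.

Lemma subseq_mask_map (X : Type) (T : eqType) (P Q : pred X) (t : seq X) (s : seq T) :
  subpred P Q -> subseq (mask (map P t) s) (mask (map Q t) s).
Proof.
move=> PQ; elim: s t => [|a s IHs] [|x t] //=.
case Px: (P x); first by rewrite (PQ _ Px) /= eqxx.
case: (Q x) => //; exact: subseq_trans (IHs t) (subseq_cons _ _).
Qed.

Definition mask_of_set N (S : {set 'I_N}) : bitseq := [seq i \in S | i <- enum 'I_N].

Section MaskOfSet.
Variables (T : eqType) (N : nat) (v : seq T).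
Hypothesis size_v : size v = N.

Lemma size_mask_of_set (S : {set 'I_N}) : size (mask (mask_of_set S) v) = #|S|.
Proof.
rewrite size_mask; last by rewrite size_map size_enum_ord.
by rewrite count_map enumT cardE /enum_mem size_filter; apply: eq_count.
Qed.

Lemma subseq_mask_of_set w :
  subseq w v -> exists S : {set 'I_N}, w = mask (mask_of_set S) v.
Proof.
case/subseqP=> m size_m ->; exists [set i : 'I_N | nth false m i].
congr mask; rewrite -[LHS](mkseq_nth false) size_m size_v /mkseq -val_enum_ord -map_comp.
by apply: eq_map => i; rewrite /= inE.
Qed.

Lemma mask_of_setS (A B : {set 'I_N}) : A \subset B ->
  subseq (mask (mask_of_set A) v) (mask (mask_of_set B) v).
Proof. by move/subsetP=> sAB; apply: subseq_mask_map. Qed.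

End MaskOfSet.

Lemma levenshtein_mask_of_set (T : finType) N (v : seq T) (A B : {set 'I_N}) :
  size v = N ->
  levenshtein (mask (mask_of_set A) v) (mask (mask_of_set B) v)
    <= (#|A| - #|A :&: B|) + (#|B| - #|A :&: B|).
Proof.
move=> size_v; rewrite -!(size_mask_of_set size_v).
by apply: levenshtein_common_subseq; apply: mask_of_setS; rewrite ?subsetIl ?subsetIr.
Qed.

Section CauchySchwarz.
Local Open Scope ring_scope.

Lemma sqr_sum_le_card_sum_sqr (R : realDomainType) (I : finType) (F : I -> R) :
  (\sum_i F i) ^+ 2 <= (\sum_i F i ^+ 2) *+ #|I|.
Proof.
set S := \sum_i F i; set Q := \sum_i F i ^+ 2.
have sum_sqr_diff : \sum_i \sum_j (F i - F j) ^+ 2 = (Q *+ #|I|) *+ 2 - (S ^+ 2) *+ 2.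
  under eq_bigr => i _ do rewrite (eq_bigr _ (fun j _ => sqrrB (F i) (F j))).
  under eq_bigr => i _ do rewrite big_split sumrB /= sumr_const.
  rewrite big_split sumrB /= sumr_const sumrMnl.
  have -> : \sum_i \sum_j F i * F j *+ 2 = S ^+ 2 *+ 2.
    rewrite /S expr2 mulr_suml -sumrMnl; apply: eq_bigr => i _.
    by rewrite mulr_sumr sumrMnl.
  rewrite -/Q (_ : #|xpredT| = #|I|) // mulr2n; ring.
have : 0 <= \sum_i \sum_j (F i - F j) ^+ 2.
  by apply: sumr_ge0 => i _; apply: sumr_ge0 => j _; apply: sqr_ge0.
by rewrite sum_sqr_diff subr_ge0 lerMn2r.
Qed.

End CauchySchwarz.

Lemma sqr_sum_le_card_sum_sqr_nat (I : finType) (a : I -> nat) :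
  (\sum_i a i) ^ 2 <= #|I| * \sum_i a i ^ 2.
Proof.
rewrite -(ler_nat int) natrX natrM !natr_sum.
under [X in (_ <= _ * X)%R]eq_bigr => i _ do rewrite natrX.
by rewrite mulrC mulr_natr sqr_sum_le_card_sum_sqr.
Qed.

Lemma johnson_rearrange M N n d : d <= 2 * n -> n <= N -> 0 < M ->
  2 * M * n ^ 2 <= N * (2 * n + (M - 1) * (2 * n - d)) ->
  M * (N * d) <= N * d + M * (2 * (N - n) * n).
Proof.
move=> le_d le_nN M_gt0.
have [a def_2n] : exists a, 2 * n = d + a by exists (2 * n - d); lia.
have [f ->] : exists f, N = n + f by exists (N - n); lia.
have [m ->] : exists m, M = m.+1 by exists M.-1; lia.
have -> : 2 * n - d = a by lia.
have -> : n + f - n = f by lia.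
rewrite subn1 /=; lia.
Qed.

Section SetSystem.
Variables (I P : finType) (C : {set I}) (S : I -> {set P}) (n d : nat).
Hypothesis card_S : forall c, c \in C -> #|S c| = n.
Hypothesis card_SI : forall c c', c \in C -> c' \in C -> c != c' ->
  2 * #|S c :&: S c'| + d <= 2 * n.

Let degree (p : P) := \sum_(c in C) (p \in S c : nat).

Lemma sum_degree : \sum_p degree p = #|C| * n.
Proof.
rewrite exchange_big /= -sum_nat_const; apply: eq_bigr => c Cc.
by rewrite -(card_S Cc) -sum1_card [RHS]big_mkcond; apply: eq_bigr => p _; case: (p \in S c).
Qed.

Lemma sum_degree_sqr :
  \sum_p degree p ^ 2 = \sum_(c in C) \sum_(c' in C) #|S c :&: S c'|.
Proof.
under eq_bigr => p _ do rewrite expnS expn1 big_distrlr.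
rewrite exchange_big; apply: eq_bigr => c _; rewrite exchange_big; apply: eq_bigr => c' _.
rewrite -sum1_card [RHS]big_mkcond; apply: eq_bigr => p _.
by rewrite inE; case: (p \in S c); case: (p \in S c').
Qed.

Lemma sum_degree_sqr_le :
  2 * \sum_p degree p ^ 2 <= #|C| * (2 * n + (#|C| - 1) * (2 * n - d)).
Proof.
rewrite sum_degree_sqr big_distrr -sum_nat_const; apply: leq_sum => c Cc.
rewrite big_distrr (bigD1 c) //= setIid card_S // leq_add2l.
have -> : #|C| - 1 = #|C :\ c| by rewrite (cardsD1 c C) Cc add1n subn1.
rewrite -sum_nat_const [X in _ <= X](eq_bigl (fun c' => (c' \in C) && (c' != c))); last first.
  by move=> c'; rewrite !inE andbC.
apply: leq_sum => c' /andP[Cc' c'c].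
have := card_SI Cc Cc'; rewrite eq_sym => /(_ c'c); lia.
Qed.

Lemma card_set_system_bound :
  #|C| * (#|P| * d) <= #|P| * d + #|C| * (2 * (#|P| - n) * n).
Proof.
have [le_C1|/card_gt1P[c [c' [Cc Cc' cc']]]] := leqP #|C| 1.
  by apply: leq_trans (leq_addr _ _); rewrite -[leqRHS]mul1n leq_mul.
have le_d := card_SI Cc Cc' cc'.
have le_nP : n <= #|P| by rewrite -(card_S Cc) max_card.
have cs := sqr_sum_le_card_sum_sqr_nat degree; rewrite sum_degree in cs.
have sum_le := sum_degree_sqr_le.
move: (\sum_p degree p ^ 2) cs sum_le => Q cs sum_le.
set M := #|C| in cs sum_le *; set N := #|P| in cs le_nP *.
have M_gt0 : 0 < M by rewrite card_gt0; apply/set0Pn; exists c.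
have key : 2 * M * n ^ 2 <= N * (2 * n + (M - 1) * (2 * n - d)).
  rewrite -(leq_pmul2l M_gt0) [leqRHS]mulnCA.
  have -> : M * (2 * M * n ^ 2) = 2 * (M * n) ^ 2 by ring.
  by apply: leq_trans (leq_mul (leqnn 2) cs) _; rewrite mulnCA leq_mul2l sum_le orbT.
apply: johnson_rearrange key => //.
exact: leq_trans (leq_addl _ _) le_d.
Qed.

End SetSystem.

Section RatioBounds.
Local Open Scope ring_scope.
Variable R : realFieldType.

Lemma natr_gap_of_ratio (n N d : nat) : (n <= N)%N ->
  1 - n%:R / N%:R < d%:R / (2 * n)%:R :> R -> (2 * (N - n) * n < N * d)%N.
Proof.
move=> le_nN gap.
have n_gt0 : (0 < n)%N.
  by case: posnP gap => // ->; rewrite muln0 invr0 !mul0r mulr0 subr0 ltr10.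
have N_gt0 : (0 < N)%N := leq_trans n_gt0 le_nN.
rewrite -(ltr_nat R).
have -> : (2 * (N - n) * n)%:R = N%:R * ((1 - n%:R / N%:R) * (2 * n)%:R) :> R.
  by rewrite !natrM natrB //; field; rewrite pnatr_eq0 -lt0n.
by rewrite (natrM _ N d) ltr_pM2l ?ltr0n // -ltr_pdivlMr // ltr0n muln_gt0 n_gt0.
Qed.

Lemma ler_nat_ratio (M a b : nat) : (b < a)%N -> (M * a <= a + M * b)%N ->
  M%:R <= a%:R / (a%:R - b%:R) :> R.
Proof.
move=> lt_ba le_Ma; rewrite ler_pdivlMr ?subr_gt0 ?ltr_nat //.
by rewrite mulrBr lerBlDr -!natrM -natrD ler_nat.
Qed.

End RatioBounds.

Theorem mainTheorem7 (Sigma : finType) (q n N d : nat)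
    (C : {set n.-tuple Sigma}) (v : N.-tuple Sigma) :
  #|Sigma| = q ->
  2 <= #|C| ->
  (forall c1 c2, c1 \in C -> c2 \in C -> c1 != c2 ->
     d <= levenshtein (tval c1) (tval c2)) ->
  (exists c1 c2, [/\ c1 \in C, c2 \in C, c1 != c2 &
     levenshtein (tval c1) (tval c2) = d]) ->
  (forall c, c \in C -> subseq (tval c) (tval v)) ->
  (d%:R / (2 * n)%:R > 1 - n%:R / N%:R :> rat)%R ->
  (#|C|%:R <= (N * d)%:R / ((N * d)%:R - (2 * (N - n) * n)%:R) :> rat)%R.
Proof.
move=> _ _ dist_C [c1 [_ [Cc1 _ _ _]]] sub_C gap.
have size_v := size_tuple v.
have /fin_all_exists[S def_S] : forall c : n.-tuple Sigma,
    exists A : {set 'I_N}, c \in C -> tval c = mask (mask_of_set A) v.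
  move=> c; have [Cc|] := boolP (c \in C); last by exists set0.
  by have [A ->] := subseq_mask_of_set size_v (sub_C c Cc); exists A.
have card_S c : c \in C -> #|S c| = n.
  by move=> Cc; rewrite -(size_mask_of_set size_v) -def_S ?size_tuple.
have card_SI c c' : c \in C -> c' \in C -> c != c' ->
    2 * #|S c :&: S c'| + d <= 2 * n.
  move=> Cc Cc' cc'; have := dist_C _ _ Cc Cc' cc'.
  rewrite !def_S // => /leq_trans/(_ (levenshtein_mask_of_set _ _ size_v)).
  have := subset_leq_card (subsetIl (S c) (S c')).
  by rewrite !card_S //; lia.
have le_nN : n <= N by rewrite -(size_tuple c1) -size_v size_subseq ?sub_C.
apply: ler_nat_ratio (natr_gap_of_ratio le_nN gap) _.
by have := card_set_system_bound card_S card_SI; rewrite card_ord.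
Qed.
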